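(* Let $\kappa_1,\kappa_2>0$ and $a=\sqrt{\kappa_1/\kappa_2}$. For $V>0$, let $\pi^V$ be the unique stationary distribution of the continuous-time Markov chain on $\mathbb{Z}_{\ge0}$ with two transitions: - $x\to x+1$ at rate $\kappa_1V$ (reaction $\emptyset\to X$); - $x\to x-2$ at rate $\frac{\kappa_2}{V}x(x-1)$ (reaction $2X\to\emptyset$). Let $\tilde\pi^V(\tilde w)=\pi^V(V\tilde w)$ for $\tilde w\in\frac1V\mathbb{Z}_{\ge0}$. If $V\to\infty$ along an increasing sequence and $\tilde x^V\in\frac1V\mathbb{Z}_{\ge0}$ with $\tilde x^V\to\tilde x\in(0,\infty)$, then $$\lim_{V\to\infty}\Big[-\tfrac1V\ln\tilde\pi^V(\tilde x^V)\Big]=g(\tilde x),$$ where $$g(\tilde x)=2\sqrt2\,a-2\tilde x\ln a+\tilde x\ln\tilde x-\tilde x(1+\ln2)-\sqrt{\tilde x^2+4a^2}+\tilde x\ln\!\big(\tilde x+\sqrt{\tilde x^2+4a^2}\big).$$ Moreover, $g$ is a Lyapunov function for the deterministic model $\dot x=\kappa_1-2\kappa_2x^2$ on $(0,\infty)$ at its equilibrium $x^*=\sqrt{\kappa_1/(2\kappa_2)}$: - $g''>0$ on $(0,\infty)$; - $g(x^* )=0$ and $g(x)>0$ for $x\neq x^*$; - $g'(x)(\kappa_1-2\kappa_2x^2)\le0$ for all $x>0$, with equality if and only if $x=x^*$.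
   Context: The Markov chain is the stochastic mass-action model of the network $\emptyset\xrightarrow{\kappa_1}X$, $2X\xrightarrow{\kappa_2}\emptyset$, with rate constants scaled as $\kappa_k^V=\kappa_k/V^{|\nu_k|-1}$ ($|\nu_k|$ = number of molecules consumed). *)

From Stdlib Require Import Reals Lra.
Open Scope R_scope.

Definition birth_rate (k1 V : R) (x : nat) : R := k1 * V.
Definition death_rate (k2 V : R) (x : nat) : R := k2 / V * INR x * (INR x - 1).

Definition stationary_dist (k1 k2 V : R) (p : nat -> R) : Prop :=
  (forall x, 0 <= p x) /\
  infinite_sum p 1 /\
  (forall x : nat,
     p x * (birth_rate k1 V x + death_rate k2 V x) =
     (match x with O => 0 | S y => p y * birth_rate k1 V y end)
     + p (x + 2)%nat * death_rate k2 V (x + 2)%nat).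

Definition gfun (k1 k2 : R) (x : R) : R :=
  let a := sqrt (k1 / k2) in
  2 * sqrt 2 * a - 2 * x * ln a + x * ln x - x * (1 + ln 2)
  - sqrt (x ^ 2 + 4 * a ^ 2) + x * ln (x + sqrt (x ^ 2 + 4 * a ^ 2)).

(** The stationary distribution balances the probability flux across each cut between
    [n] and [n + 1]; this gives a two-term recursion for the ratios
    [r n = pi (n + 1) / pi n]. Its fixed point at [n = x V] is [rho x], the positive
    root of [x^2 r (1 + r) = a^2], and [ln (rho x) = - g' x]. For [n >= dl V] the
    recursion is a contraction in logarithmic scale, so [ln (r n) = - g' (n / V) + o(1)]
    uniformly in [V], and summing shows that [ln (pi n) + V g (n / V)] varies by [o(V)]
    on every window [dl V <= n <= M V]. That near-constant is [o(V)]: from above because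
    [pi <= 1] at [n ~ z V] where [g z = 0], from below because the tails outside the
    window are geometrically small while the total mass is [1].
    The Lyapunov properties follow from [g'' x = 1 / x + 1 / sqrt (x^2 + 4 a^2) > 0]
    and [g z = g' z = 0] at the equilibrium [z = a / sqrt 2]. *)

From Stdlib Require Import Reals Lra Lia Arith.
From Coquelicot Require Import Coquelicot.
Open Scope R_scope.

Lemma div_le_div_cross a b c d : 0 < b -> 0 < d -> a * d <= c * b -> a / b <= c / d.
Proof.
  intros hb hd h; replace (a / b) with (a * d * / (b * d)) by (field; lra).
  replace (c / d) with (c * b * / (b * d)) by (field; lra).
  apply Rmult_le_compat_r; auto; apply Rlt_le, Rinv_0_lt_compat; nra.
Qed.

Lemma exp_le_compat x y : x <= y -> exp x <= exp y.
Proof. intros [l | <-]; [apply Rlt_le, exp_increasing | right]; auto. Qed.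

Lemma ln_1p_le t : 0 < t -> ln (1 + t) <= t.
Proof.
  intros ht; rewrite <- (ln_exp t) at 2.
  apply ln_le; [lra | apply exp_ineq1_le].
Qed.

Lemma ln_sqrt2 : ln (sqrt 2) = ln 2 / 2.
Proof.
  assert (h : ln (sqrt 2 * sqrt 2) = ln 2) by (rewrite sqrt_sqrt; lra).
  rewrite ln_mult in h by (apply sqrt_lt_R0; lra); lra.
Qed.

Lemma ln_affine_contraction c d s t T : 0 <= c -> 0 < d -> 0 < s -> 0 < t -> s <= T -> t <= T ->
  Rabs (ln (c + d * s) - ln (c + d * t)) <= d * T / (c + d * T) * Rabs (ln s - ln t).
Proof.
  assert (one_side : forall s t, 0 <= c -> 0 < d -> 0 < s -> s < t -> t <= T ->
    0 <= ln (c + d * t) - ln (c + d * s) <= d * T / (c + d * T) * (ln t - ln s)).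
  { clear s t; intros s t hc hd hs hst htT.
    assert (hl : ln s < ln t) by (apply ln_increasing; lra).
    destruct (MVT_cor2 (fun u => ln (c + d * exp u)) (fun u => d * exp u / (c + d * exp u))
                (ln s) (ln t) hl) as [xi [e hxi]].
    { intros u hu; pose proof (exp_pos u); apply is_derive_Reals; auto_derive; [nra | field; nra]. }
    rewrite !exp_ln in e by lra; rewrite e.
    pose proof (exp_pos xi).
    assert (exp xi <= t) by (rewrite <- (exp_ln t) by lra; apply Rlt_le, exp_increasing; lra).
    assert (0 <= d * exp xi / (c + d * exp xi)) by (apply Rdiv_le_0_compat; nra).
    assert (d * exp xi / (c + d * exp xi) <= d * T / (c + d * T)).
    { apply div_le_div_cross; try nra.
      assert (0 <= d * c * (T - exp xi)) by (repeat apply Rmult_le_pos; lra). nra. }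
    split; nra. }
  intros hc hd hs ht hsT htT.
  destruct (Rtotal_order s t) as [l | [<- | l]].
  - destruct (one_side s t hc hd hs l htT).
    assert (ln s < ln t) by (apply ln_increasing; lra).
    rewrite Rabs_minus_sym, (Rabs_minus_sym (ln s)), !Rabs_right by lra; lra.
  - rewrite !Rminus_eq_0, !Rabs_R0; lra.
  - destruct (one_side t s hc hd ht l hsT).
    assert (ln t < ln s) by (apply ln_increasing; lra).
    rewrite !Rabs_right by lra; lra.
Qed.

Lemma partial_sum_le (p : nat -> R) n m : (forall i, 0 <= p i) -> (n <= m)%nat ->
  sum_f_R0 p n <= sum_f_R0 p m.
Proof. intros hp h; induction h; [lra | simpl; pose proof (hp (S m)); lra]. Qed.

Lemma term_le_partial_sum (p : nat -> R) n : (forall i, 0 <= p i) -> p n <= sum_f_R0 p n.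
Proof.
  intros hp; destruct n as [| n]; simpl; [lra |].
  pose proof (partial_sum_le p 0 n hp ltac:(lia)); pose proof (hp 0%nat); simpl in *; lra.
Qed.

Lemma infinite_sum_le (p : nat -> R) l B : infinite_sum p l ->
  (forall n, sum_f_R0 p n <= B) -> l <= B.
Proof.
  intros hl hB; destruct (Rle_or_lt l B) as [h | h]; auto.
  destruct (hl (l - B)) as [N HN]; [lra |].
  pose proof (HN N (le_n N)) as H; unfold Rdist in H; pose proof (hB N).
  rewrite Rabs_minus_sym, Rabs_right in H by lra; lra.
Qed.

Lemma window_mass_bound (p : nat -> R) nlo nhi c : (nlo <= nhi)%nat ->
  (forall n, 0 <= p n) -> infinite_sum p 1 ->
  (forall j, (j < nlo)%nat -> p j <= 2 * p (S j)) ->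
  (forall j, (nhi <= j)%nat -> 2 * p (S j) <= p j) ->
  (forall j, (nlo <= j <= nhi)%nat -> p j <= c) ->
  1 <= (INR nhi + 3) * 2 ^ nlo * c.
Proof.
  intros hle hp hs Hlo Hhi Hw.
  assert (h2 : 1 <= 2 ^ nlo) by (apply pow_R1_Rle; lra).
  assert (left_tail : forall i, (i <= nlo)%nat -> p (nlo - i)%nat <= 2 ^ i * p nlo).
  { induction i as [| i IH]; intros hi; simpl; [rewrite Nat.sub_0_r; lra |].
    pose proof (Hlo (nlo - S i)%nat ltac:(lia)) as h.
    replace (S (nlo - S i)) with (nlo - i)%nat in h by lia.
    pose proof (IH ltac:(lia)); lra. }
  assert (below_nhi : forall j, (j <= nhi)%nat -> p j <= 2 ^ nlo * c).
  { intros j hj; destruct (le_lt_dec nlo j) as [l | l].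
    - pose proof (Hw j ltac:(lia)); pose proof (hp j); nra.
    - pose proof (left_tail (nlo - j)%nat ltac:(lia)) as h.
      replace (nlo - (nlo - j))%nat with j in h by lia.
      pose proof (Hw nlo ltac:(lia)); pose proof (hp nlo).
      assert (2 ^ (nlo - j) <= 2 ^ nlo) by (apply Rle_pow; [lra | lia]); nra. }
  assert (head : forall L, (L <= nhi)%nat -> sum_f_R0 p L <= (INR L + 1) * (2 ^ nlo * c)).
  { induction L as [| L IH]; intros hL.
    - simpl; pose proof (below_nhi 0%nat ltac:(lia)); lra.
    - rewrite tech5, S_INR; pose proof (below_nhi (S L) hL); pose proof (IH ltac:(lia)); lra. }
  assert (right_tail : forall i,
            sum_f_R0 p (nhi + i) + 2 * p (nhi + i)%nat <= sum_f_R0 p nhi + 2 * p nhi).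
  { induction i as [| i IH]; [rewrite Nat.add_0_r; lra |].
    replace (nhi + S i)%nat with (S (nhi + i)) by lia; rewrite tech5.
    pose proof (Hhi (nhi + i)%nat ltac:(lia)); pose proof (hp (S (nhi + i)));
    pose proof (hp (nhi + i)%nat); lra. }
  apply (infinite_sum_le p 1); auto; intros L.
  pose proof (head nhi (le_n _)); pose proof (Hw nhi ltac:(lia)).
  assert (0 <= c) by (pose proof (hp nlo); pose proof (Hw nlo ltac:(lia)); lra).
  assert (sum_f_R0 p nhi + 2 * p nhi <= (INR nhi + 3) * 2 ^ nlo * c) by nra.
  destruct (le_lt_dec L nhi) as [l | l].
  - pose proof (partial_sum_le p L nhi hp l); pose proof (hp nhi); lra.
  - pose proof (right_tail (L - nhi)%nat) as h; replace (nhi + (L - nhi))%nat with L in h by lia.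
    pose proof (hp L); lra.
Qed.

(** * The quasi-potential *)

Definition hypot (a x : R) : R := sqrt (x ^ 2 + 4 * a ^ 2).

Definition qpot (a x : R) : R :=
  2 * sqrt 2 * a - 2 * x * ln a + x * ln x - x * (1 + ln 2)
  - hypot a x + x * ln (x + hypot a x).

Definition dqpot (a x : R) : R := ln x + ln (x + hypot a x) - ln 2 - 2 * ln a.

Definition d2qpot (a x : R) : R := / x + / hypot a x.

Lemma gfun_qpot k1 k2 : gfun k1 k2 = qpot (sqrt (k1 / k2)).
Proof. reflexivity. Qed.

Section QuasiPotential.

Variable a : R.
Hypothesis ha : 0 < a.

Lemma hypot_pos x : 0 < hypot a x.
Proof. apply sqrt_lt_R0; nra. Qed.

Lemma hypot_sqr x : hypot a x * hypot a x = x ^ 2 + 4 * a ^ 2.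
Proof. apply sqrt_sqrt; nra. Qed.

Lemma hypot_gt x : x < hypot a x.
Proof. pose proof (hypot_pos x); pose proof (hypot_sqr x); nra. Qed.

Lemma hypot_le_compat x y : 0 <= x -> x <= y -> hypot a x <= hypot a y.
Proof. intros; apply sqrt_le_1_alt; nra. Qed.

Lemma qpot_derive x : 0 < x -> derivable_pt_lim (qpot a) x (dqpot a x).
Proof.
  intros hx; apply is_derive_Reals; unfold qpot, dqpot, hypot.
  pose proof (hypot_pos x) as hs; pose proof (hypot_gt x) as hg; unfold hypot in *.
  auto_derive.
  - replace (x * (x * 1) + 4 * (a * (a * 1))) with (x ^ 2 + 4 * a ^ 2) by ring.
    repeat split; nra.
  - replace (x * (x * 1) + 4 * (a * (a * 1))) with (x ^ 2 + 4 * a ^ 2) by ring.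
    set (s := sqrt (x ^ 2 + 4 * a ^ 2)) in *; field; lra.
Qed.

Lemma dqpot_derive x : 0 < x -> derivable_pt_lim (dqpot a) x (d2qpot a x).
Proof.
  intros hx; apply is_derive_Reals; unfold dqpot, d2qpot, hypot.
  pose proof (hypot_pos x) as hs; pose proof (hypot_gt x) as hg; unfold hypot in *.
  auto_derive.
  - replace (x * (x * 1) + 4 * (a * (a * 1))) with (x ^ 2 + 4 * a ^ 2) by ring.
    repeat split; nra.
  - replace (x * (x * 1) + 4 * (a * (a * 1))) with (x ^ 2 + 4 * a ^ 2) by ring.
    set (s := sqrt (x ^ 2 + 4 * a ^ 2)) in *; field; lra.
Qed.

Lemma d2qpot_pos x : 0 < x -> 0 < d2qpot a x.
Proof.
  intros hx; pose proof (Rinv_0_lt_compat _ hx);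
  pose proof (Rinv_0_lt_compat _ (hypot_pos x)); unfold d2qpot; lra.
Qed.

Lemma dqpot_lt x y : 0 < x -> x < y -> dqpot a x < dqpot a y.
Proof.
  intros hx hxy; unfold dqpot.
  pose proof (hypot_le_compat x y ltac:(lra) ltac:(lra)); pose proof (hypot_pos x).
  pose proof (ln_increasing x y hx hxy).
  pose proof (ln_le (x + hypot a x) (y + hypot a y) ltac:(lra) ltac:(lra)); lra.
Qed.

Lemma dqpot_le x y : 0 < x -> x <= y -> dqpot a x <= dqpot a y.
Proof. intros hx [hxy | <-]; [apply Rlt_le, dqpot_lt | right]; auto. Qed.

Lemma qpot_increment x y : 0 < x -> x < y ->
  dqpot a x * (y - x) <= qpot a y - qpot a x <= dqpot a y * (y - x).
Proof.
  intros hx hxy.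
  destruct (MVT_cor2 (qpot a) (dqpot a) x y hxy) as [c [-> hc]].
  { intros c hc; apply qpot_derive; lra. }
  pose proof (dqpot_le x c hx ltac:(lra)); pose proof (dqpot_le c y ltac:(lra) ltac:(lra)).
  split; nra.
Qed.

Lemma qpot_continuous x : 0 < x -> continuity_pt (qpot a) x.
Proof. intros hx; apply derivable_continuous_pt; exists (dqpot a x); apply qpot_derive; auto. Qed.

(** The equilibrium [z = a / sqrt 2] of the deterministic model. *)
Variable z : R.
Hypothesis hz : 0 < z.
Hypothesis hza : 2 * z ^ 2 = a ^ 2.

Lemma a_eq_sqrt2_z : a = sqrt 2 * z.
Proof.
  symmetry; rewrite <- (sqrt_pow2 a), <- hza by lra.
  rewrite sqrt_mult, sqrt_pow2 by nra; ring.
Qed.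

Lemma hypot_equilibrium : hypot a z = 3 * z.
Proof.
  unfold hypot; replace (z ^ 2 + 4 * a ^ 2) with ((3 * z) ^ 2) by nra.
  apply sqrt_pow2; lra.
Qed.

Lemma ln_equilibrium_terms : ln a = ln 2 / 2 + ln z /\ ln (z + hypot a z) = 2 * ln 2 + ln z.
Proof.
  rewrite hypot_equilibrium, a_eq_sqrt2_z, ln_mult, ?ln_sqrt2;
    try (apply sqrt_lt_R0); try lra.
  replace (z + 3 * z) with (2 * 2 * z) by ring.
  rewrite !ln_mult; lra.
Qed.

Lemma dqpot_equilibrium : dqpot a z = 0.
Proof. unfold dqpot; destruct ln_equilibrium_terms as [-> ->]; lra. Qed.

Lemma qpot_equilibrium : qpot a z = 0.
Proof.
  unfold qpot; destruct ln_equilibrium_terms as [-> ->].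
  rewrite hypot_equilibrium, a_eq_sqrt2_z at 1.
  replace (2 * sqrt 2 * (sqrt 2 * z)) with (2 * (sqrt 2 * sqrt 2) * z) by ring.
  rewrite sqrt_sqrt; lra.
Qed.

Lemma qpot_pos x : 0 < x -> x <> z -> 0 < qpot a x.
Proof.
  intros hx hne; rewrite <- qpot_equilibrium.
  destruct (Rtotal_order x z) as [l | [e | l]]; [| contradiction |].
  - destruct (MVT_cor2 (qpot a) (dqpot a) x z l) as [c [e hc]].
    { intros c hc; apply qpot_derive; lra. }
    pose proof (dqpot_lt c z ltac:(lra) ltac:(lra)); rewrite dqpot_equilibrium in *; nra.
  - destruct (MVT_cor2 (qpot a) (dqpot a) z x l) as [c [e hc]].
    { intros c hc; apply qpot_derive; lra. }
    pose proof (dqpot_lt z c hz ltac:(lra)); rewrite dqpot_equilibrium in *; nra.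
Qed.

Lemma qpot_nonneg x : 0 < x -> 0 <= qpot a x.
Proof.
  intros hx; destruct (Req_dec x z) as [-> | hne].
  - rewrite qpot_equilibrium; lra.
  - apply Rlt_le, qpot_pos; auto.
Qed.

(** The drift of the deterministic model is [c (z^2 - x^2)] with [c = 2 k2]. *)
Lemma dqpot_drift_nonpos c x : 0 < c -> 0 < x -> dqpot a x * (c * (z ^ 2 - x ^ 2)) <= 0.
Proof.
  intros hc hx; destruct (Rle_or_lt x z) as [l | l].
  - pose proof (dqpot_le x z hx l) as hd; rewrite dqpot_equilibrium in hd.
    assert (x ^ 2 <= z ^ 2) by (apply pow_incr; lra).
    assert (hw : 0 <= c * (z ^ 2 - x ^ 2)) by (apply Rmult_le_pos; lra).
    set (w := c * (z ^ 2 - x ^ 2)) in *; nra.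
  - pose proof (dqpot_lt z x hz l) as hd; rewrite dqpot_equilibrium in hd.
    assert (z ^ 2 < x ^ 2) by (simpl; nra).
    assert (hw : c * (z ^ 2 - x ^ 2) < 0) by nra.
    set (w := c * (z ^ 2 - x ^ 2)) in *; nra.
Qed.

Lemma dqpot_drift_eq0 c x : 0 < c -> 0 < x ->
  dqpot a x * (c * (z ^ 2 - x ^ 2)) = 0 <-> x = z.
Proof.
  intros hc hx; split.
  - intros e; apply Rmult_integral in e as [e | e].
    + destruct (Rtotal_order x z) as [l | [l | l]]; auto;
        [pose proof (dqpot_lt x z hx l) | pose proof (dqpot_lt z x hz l)];
        rewrite dqpot_equilibrium in *; lra.
    + assert (e' : (z - x) * (z + x) = 0) by (apply (Rmult_eq_reg_l c); nra).
      apply Rmult_integral in e' as [e' | e']; lra.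
  - intros ->; rewrite dqpot_equilibrium; ring.
Qed.

End QuasiPotential.

(** [rho a x] is the positive root [r] of [x^2 r (1 + r) = a^2]; it is the limit
    of the ratio [pi (n + 1) / pi n] when [n / V] tends to [x]. *)
Definition rho (a x : R) : R := 2 * a ^ 2 / (x * (x + hypot a x)).

Section LimitRatio.

Variable a : R.
Hypothesis ha : 0 < a.

Lemma rho_pos x : 0 < x -> 0 < rho a x.
Proof. intros hx; pose proof (hypot_pos a ha x); apply Rdiv_lt_0_compat; nra. Qed.

Lemma ln_rho x : 0 < x -> ln (rho a x) = - dqpot a x.
Proof.
  intros hx; unfold rho, dqpot; pose proof (hypot_pos a ha x).
  rewrite ln_div, !ln_mult, ln_pow by nra; simpl INR; ring.
Qed.

Lemma rho_fixed x : 0 < x -> x ^ 2 * rho a x * (1 + rho a x) = a ^ 2.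
Proof.
  intros hx; unfold rho; pose proof (hypot_sqr a x); pose proof (hypot_gt a ha x).
  set (s := hypot a x) in *.
  assert (key : (x + s) ^ 2 = 2 * (x * (x + s) + 2 * a ^ 2)) by nra.
  transitivity (a ^ 2 * (2 * (x * (x + s) + 2 * a ^ 2)) / (x + s) ^ 2);
    [field; split; nra | rewrite <- key; field; nra].
Qed.

Lemma rho_le x : 0 < x -> rho a x <= a ^ 2 / x ^ 2.
Proof.
  intros hx; pose proof (rho_fixed x hx); pose proof (rho_pos x hx).
  rewrite <- (Rdiv_1_r (rho a x)); apply div_le_div_cross; nra.
Qed.

Lemma rho_ge x : 0 < x -> a ^ 2 / (x ^ 2 + a ^ 2) <= rho a x.
Proof.
  intros hx; pose proof (rho_fixed x hx); pose proof (rho_pos x hx).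
  assert (rho a x * x ^ 2 <= a ^ 2).
  { apply (Rle_div_r _ _ _ (pow_lt x 2 hx)), rho_le; auto. }
  rewrite <- (Rdiv_1_r (rho a x)); apply div_le_div_cross; nra.
Qed.

Lemma sqr_mul_rho x : 0 < x -> x ^ 2 * rho a x = 2 * a ^ 2 * x / (x + hypot a x).
Proof. intros hx; unfold rho; pose proof (hypot_gt a ha x); field; nra. Qed.

Lemma mul_rho x : 0 < x -> x * rho a x = 2 * a ^ 2 / (x + hypot a x).
Proof. intros hx; unfold rho; pose proof (hypot_gt a ha x); field; nra. Qed.

Lemma sqr_mul_rho_le x y : 0 < x -> x <= y -> x ^ 2 * rho a x <= y ^ 2 * rho a y.
Proof.
  intros hx hxy; rewrite !sqr_mul_rho by lra.
  pose proof (hypot_gt a ha x); pose proof (hypot_gt a ha y).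
  pose proof (hypot_sqr a x); pose proof (hypot_sqr a y).
  pose proof (hypot_pos a ha x); pose proof (hypot_pos a ha y).
  assert (cross : x * hypot a y <= y * hypot a x).
  { assert (x ^ 2 <= y ^ 2) by (apply pow_incr; lra).
    assert ((y * hypot a x - x * hypot a y) * (y * hypot a x + x * hypot a y)
            = 4 * a ^ 2 * (y ^ 2 - x ^ 2)) by nra.
    assert (0 <= 4 * a ^ 2 * (y ^ 2 - x ^ 2)) by (apply Rmult_le_pos; nra).
    assert (0 < y * hypot a x + x * hypot a y) by nra.
    nra. }
  apply div_le_div_cross; nra.
Qed.

Lemma mul_rho_ge x y : 0 < x -> x <= y -> y * rho a y <= x * rho a x.
Proof.
  intros hx hxy; rewrite !mul_rho by lra.
  pose proof (hypot_gt a ha x); pose proof (hypot_le_compat a x y ltac:(lra) hxy).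
  apply div_le_div_cross; nra.
Qed.

Lemma rho_recursion_denominator V N : 0 < V -> 1 <= N ->
  N ^ 2 * (1 + rho a (N / V)) <= N * (N + 1) + rho a ((N + 1) / V) * ((N + 1) * (N + 2))
  <= (N + 1) ^ 2 * (1 + rho a (N / V)).
Proof.
  intros hV hN; set (r := rho a (N / V)); set (s := rho a ((N + 1) / V)).
  assert (hx : 0 < N / V) by (apply Rdiv_lt_0_compat; lra).
  assert (hxy : N / V <= (N + 1) / V)
    by (apply Rmult_le_compat_r; [apply Rlt_le, Rinv_0_lt_compat |]; lra).
  assert (0 < r) by (apply rho_pos; auto).
  assert (0 < s) by (apply rho_pos; lra).
  assert (sqr_mono : N ^ 2 * r <= (N + 1) ^ 2 * s).
  { pose proof (sqr_mul_rho_le _ _ hx hxy) as h; fold r s in h.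
    apply (Rmult_le_reg_r (/ V ^ 2)); [apply Rinv_0_lt_compat, pow_lt; lra |].
    replace (N ^ 2 * r * / V ^ 2) with ((N / V) ^ 2 * r) by (field; lra).
    replace ((N + 1) ^ 2 * s * / V ^ 2) with (((N + 1) / V) ^ 2 * s) by (field; lra).
    exact h. }
  assert (mul_anti : (N + 1) * s <= N * r).
  { pose proof (mul_rho_ge _ _ hx hxy) as h; fold r s in h.
    apply (Rmult_le_reg_r (/ V)); [apply Rinv_0_lt_compat; lra |].
    replace ((N + 1) * s * / V) with ((N + 1) / V * s) by (field; lra).
    replace (N * r * / V) with (N / V * r) by (field; lra). exact h. }
  split; [nra |].
  assert (s * ((N + 1) * (N + 2)) <= N * r * (N + 2)) by nra; nra.
Qed.

(** [rho] nearly solves the recursion [r n = a^2 V^2 / (n (n+1) + (n+1) (n+2) r (n+1))]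
    satisfied by the successive ratios of the stationary distribution. *)
Lemma rho_recursion_defect V N : 0 < V -> 1 <= N ->
  Rabs (ln (a ^ 2 * V ^ 2 / (N * (N + 1) + rho a ((N + 1) / V) * ((N + 1) * (N + 2))))
        - ln (rho a (N / V))) <= 2 / N.
Proof.
  intros hV hN; destruct (rho_recursion_denominator V N hV hN) as [D_lo D_hi].
  set (r := rho a (N / V)) in *.
  set (D := N * (N + 1) + rho a ((N + 1) / V) * ((N + 1) * (N + 2))) in *.
  assert (hx : 0 < N / V) by (apply Rdiv_lt_0_compat; lra).
  assert (hr : 0 < r) by (apply rho_pos; auto).
  assert (fixed : N ^ 2 * r * (1 + r) = a ^ 2 * V ^ 2).
  { pose proof (rho_fixed _ hx) as e; fold r in e.
    apply (Rmult_eq_reg_r (/ V ^ 2)); [| apply Rinv_neq_0_compat; apply pow_nonzero; lra].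
    rewrite <- e; field; lra. }
  rewrite <- fixed.
  assert (hD : 0 < D) by nra.
  assert (up : N ^ 2 * r * (1 + r) / D <= r) by (apply (Rle_div_l _ _ _ hD); nra).
  assert (lo : r * (N ^ 2 / (N + 1) ^ 2) <= N ^ 2 * r * (1 + r) / D).
  { replace (r * (N ^ 2 / (N + 1) ^ 2)) with (N ^ 2 * r * (1 + r) / ((N + 1) ^ 2 * (1 + r)))
      by (field; lra).
    apply div_le_div_cross; [nra | lra |].
    apply Rmult_le_compat_l; [| exact D_hi]; apply Rmult_le_pos; nra. }
  assert (hq : 0 < r * (N ^ 2 / (N + 1) ^ 2))
    by (apply Rmult_lt_0_compat; [lra | apply Rdiv_lt_0_compat; nra]).
  pose proof (ln_le _ _ hq lo) as L2; pose proof (ln_le _ _ (Rlt_le_trans _ _ _ hq lo) up) as L1.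
  replace ((N + 1) ^ 2) with ((1 + / N) ^ 2 * N ^ 2) in L2 by (field; lra).
  assert (hiN : 0 < / N) by (apply Rinv_0_lt_compat; lra).
  assert (hN2 : 0 < N ^ 2) by (apply pow_lt; lra).
  assert (h1N : 0 < (1 + / N) ^ 2) by (apply pow_lt; lra).
  rewrite ln_mult, ln_div, ln_mult, !ln_pow in L2; try lra;
    try (apply Rdiv_lt_0_compat; nra); try nra.
  pose proof (ln_1p_le (/ N) hiN).
  simpl INR in L2; apply Rabs_le; unfold Rdiv in *; lra.
Qed.

End LimitRatio.

(** * Flux balance of the stationary distribution *)

(** Flux balance across the cut between [n] and [n + 1], after division by [k2 / V]:
    here [C = (k1 / k2) V^2]. *)
Definition cut_balance (C : R) (p : nat -> R) : Prop :=
  forall n, p n * C = p (S n) * (INR n * (INR n + 1))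
                      + p (S (S n)) * ((INR n + 1) * (INR n + 2)).

Lemma stationary_cut_balance k1 k2 V p : 0 < k2 -> 0 < V -> stationary_dist k1 k2 V p ->
  cut_balance (k1 / k2 * V ^ 2) p.
Proof.
  intros hk2 hV [_ [_ hb]].
  assert (flux : forall n, p n * (k1 * V)
            = p (S n) * death_rate k2 V (S n) + p (S (S n)) * death_rate k2 V (S (S n))).
  { induction n as [| n IH].
    - pose proof (hb 0%nat) as h; unfold birth_rate, death_rate in *; simpl in *; lra.
    - pose proof (hb (S n)) as h; replace (S n + 2)%nat with (S (S (S n))) in h by lia.
      unfold birth_rate in *; lra. }
  intros n; pose proof (flux n) as h; unfold death_rate in h; rewrite !S_INR in h.
  apply (Rmult_eq_reg_r (k2 / V)); [| apply Rgt_not_eq, Rdiv_lt_0_compat; lra].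
  replace (p n * (k1 / k2 * V ^ 2) * (k2 / V)) with (p n * (k1 * V)) by (field; lra).
  rewrite h; field; lra.
Qed.

Definition succ_ratio (p : nat -> R) (n : nat) : R := p (S n) / p n.

Section CutBalance.

Variables (C : R) (p : nat -> R).
Hypothesis hC : 0 < C.
Hypothesis hcut : cut_balance C p.

Lemma cut_balance_pos : (forall n, 0 <= p n) -> ~ (forall n, p n = 0) -> forall n, 0 < p n.
Proof.
  intros hp hnz.
  assert (up : forall n, p (S n) = 0 -> p (S (S n)) = 0).
  { intros n h; pose proof (hcut (S n)) as c; rewrite h, S_INR in c.
    pose proof (hp (S (S n))); pose proof (hp (S (S (S n)))); pose proof (pos_INR n).
    assert (0 <= p (S (S (S n))) * ((INR n + 1 + 1) * (INR n + 1 + 2))) by (apply Rmult_le_pos; nra).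
    assert (0 <= p (S (S n)) * ((INR n + 1) * (INR n + 1 + 1))) by (apply Rmult_le_pos; nra).
    assert (e : p (S (S n)) * ((INR n + 1) * (INR n + 1 + 1)) = 0) by lra.
    apply Rmult_integral in e as [e | e]; auto; nra. }
  assert (down : forall n, p (S n) = 0 -> p n = 0).
  { intros n h; pose proof (hcut n) as c; rewrite h, (up n h) in c.
    assert (e : p n * C = 0) by lra; apply Rmult_integral in e as [e | e]; auto; lra. }
  assert (all_zero : p 0%nat = 0 -> forall n, p n = 0).
  { intros h0; assert (h2 : p 2%nat = 0).
    { pose proof (hcut 0%nat) as c; rewrite h0 in c; simpl in c.
      assert (e : p 2%nat * 2 = 0) by lra; apply Rmult_integral in e as [e | e]; auto; lra. }
    assert (hS : forall n, p (S n) = 0) by (induction n; auto).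
    intros [| n]; auto. }
  intros n; destruct (hp n) as [l | e]; auto; exfalso.
  apply hnz, all_zero; clear hnz; induction n as [| n IH]; auto.
  apply IH; symmetry; apply down; auto.
Qed.

Hypothesis hp : forall n, 0 < p n.

Lemma succ_ratio_pos n : 0 < succ_ratio p n.
Proof. apply Rdiv_lt_0_compat; auto. Qed.

Lemma succ_ratio_recursion n :
  succ_ratio p n * (INR n * (INR n + 1) + succ_ratio p (S n) * ((INR n + 1) * (INR n + 2))) = C.
Proof.
  unfold succ_ratio; pose proof (hp n); pose proof (hp (S n)).
  apply (Rmult_eq_reg_r (p n)); [| lra]; rewrite (Rmult_comm C (p n)), hcut; field; lra.
Qed.

Lemma succ_ratio_upper n : succ_ratio p n * (INR n * (INR n + 1)) <= C.
Proof.
  rewrite <- (succ_ratio_recursion n).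
  pose proof (succ_ratio_pos n); pose proof (succ_ratio_pos (S n)); pose proof (pos_INR n).
  assert (0 <= succ_ratio p (S n) * ((INR n + 1) * (INR n + 2))) by (apply Rmult_le_pos; nra).
  nra.
Qed.

Lemma succ_ratio_lower n : C <= succ_ratio p n * (INR n * (INR n + 1) + C).
Proof.
  pose proof (succ_ratio_upper (S n)) as h; rewrite S_INR in h.
  rewrite <- (succ_ratio_recursion n) at 1; pose proof (succ_ratio_pos n).
  replace ((INR n + 1) * (INR n + 2)) with ((INR n + 1) * (INR n + 1 + 1)) by ring.
  apply Rmult_le_compat_l; lra.
Qed.

Lemma succ_ratio_ge_half n : INR n * (INR n + 1) <= C -> p n <= 2 * p (S n).
Proof.
  intros h; pose proof (succ_ratio_lower n); pose proof (succ_ratio_pos n).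
  assert (1 <= 2 * succ_ratio p n) by nra.
  unfold succ_ratio in *; pose proof (hp n).
  apply (Rmult_le_compat_r (p n)) in H1; [| lra].
  replace (2 * (p (S n) / p n) * p n) with (2 * p (S n)) in H1 by (field; lra); lra.
Qed.

Lemma succ_ratio_le_half n : 2 * C <= INR n * (INR n + 1) -> 2 * p (S n) <= p n.
Proof.
  intros h; pose proof (succ_ratio_upper n); pose proof (succ_ratio_pos n).
  assert (2 * succ_ratio p n <= 1) by nra.
  unfold succ_ratio in *; pose proof (hp n).
  apply (Rmult_le_compat_r (p n)) in H1; [| lra].
  replace (2 * (p (S n) / p n) * p n) with (2 * p (S n)) in H1 by (field; lra); lra.
Qed.

End CutBalance.

Lemma stationary_pos k1 k2 V p : 0 < k1 -> 0 < k2 -> 0 < V -> stationary_dist k1 k2 V p ->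
  forall n, 0 < p n.
Proof.
  intros hk1 hk2 hV hs; pose proof (stationary_cut_balance k1 k2 V p hk2 hV hs) as hcut.
  destruct hs as [hp [hl _]].
  apply (cut_balance_pos (k1 / k2 * V ^ 2)); auto.
  - apply Rmult_lt_0_compat; [apply Rdiv_lt_0_compat | apply pow_lt]; lra.
  - intros h0; assert (e : forall n, sum_f_R0 p n = 0).
    { induction n; simpl; rewrite h0; [lra | rewrite IHn; lra]. }
    destruct (hl (1 / 2)) as [N HN]; [lra |]; pose proof (HN N (le_n _)) as H.
    unfold Rdist in H; rewrite e, Rabs_left in H; lra.
Qed.

(** * Convergence of the successive ratios *)

Definition ratio_err (a V : R) (p : nat -> R) (n : nat) : R :=
  Rabs (ln (succ_ratio p n) - ln (rho a (INR n / V))).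

Lemma contraction_factor_le a V N dl : 0 < a -> 0 < V -> 0 < dl -> 1 <= N -> dl * V <= N ->
  let T := a ^ 2 * V ^ 2 / (N + 1) ^ 2 in
  (N + 1) * (N + 2) * T / (N * (N + 1) + (N + 1) * (N + 2) * T) <= 3 * a ^ 2 / (3 * a ^ 2 + dl ^ 2).
Proof.
  intros ha hV hd hN hdN T.
  assert (hT : 0 < T) by (apply Rdiv_lt_0_compat; [apply Rmult_lt_0_compat |]; apply pow_lt; lra).
  apply div_le_div_cross; try nra.
  assert (E : (N + 1) * (N + 2) * T * dl ^ 2 = (N + 2) / (N + 1) * a ^ 2 * (dl * V) ^ 2)
    by (unfold T; field; lra).
  assert ((dl * V) ^ 2 <= N ^ 2) by (apply pow_incr; nra).
  assert ((N + 2) / (N + 1) <= 2) by (apply Rle_div_l; lra).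
  assert (0 <= (N + 2) / (N + 1)) by (apply Rdiv_le_0_compat; lra).
  assert ((N + 1) * (N + 2) * T * dl ^ 2 <= 2 * a ^ 2 * N ^ 2).
  { rewrite E; apply Rle_trans with (2 * a ^ 2 * (dl * V) ^ 2); [| nra].
    apply Rmult_le_compat_r; [nra |]; apply Rmult_le_compat_r; nra. }
  nra.
Qed.

Lemma unroll_contraction (e : nat -> R) (q : R) n : 0 <= q < 1 -> 1 <= INR n ->
  (forall m, 0 <= e m) -> (forall m, (n <= m)%nat -> e m <= q * e (S m) + 2 / INR m) ->
  forall K, e n <= q ^ K * e (n + K)%nat + 2 / (INR n * (1 - q)).
Proof.
  intros hq hn he H K; revert n hn H; induction K as [| K IH]; intros n hn H.
  - rewrite Nat.add_0_r; simpl.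
    assert (0 < 2 / (INR n * (1 - q))) by (apply Rdiv_lt_0_compat; nra); lra.
  - pose proof (IH (S n) ltac:(rewrite S_INR; lra) ltac:(intros; apply H; lia)) as IHn.
    replace (S n + K)%nat with (n + S K)%nat in IHn by lia; rewrite S_INR in IHn.
    pose proof (H n (le_n n)).
    assert (2 / ((INR n + 1) * (1 - q)) <= 2 / (INR n * (1 - q))) by (apply div_le_div_cross; nra).
    assert (q * (2 / (INR n * (1 - q))) + 2 / INR n = 2 / (INR n * (1 - q))) by (field; lra).
    simpl; nra.
Qed.

Section RatioError.

Variables (a V : R) (p : nat -> R).
Hypothesis ha : 0 < a.
Hypothesis hV : 0 < V.
Hypothesis hp : forall n, 0 < p n.
Hypothesis hcut : cut_balance (a ^ 2 * V ^ 2) p.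

(** With [r n = a^2 V^2 / (c + d r (n + 1))], the map [t |-> ln (c + d t)] contracts
    logarithmic distances by [d T / (c + d T) <= q] on [(0, T]], and [rho] misses the
    recursion by at most [2 / n]. *)
Lemma ratio_err_step n dl : 0 < dl -> 1 <= INR n -> dl * V <= INR n ->
  ratio_err a V p n <= 3 * a ^ 2 / (3 * a ^ 2 + dl ^ 2) * ratio_err a V p (S n) + 2 / INR n.
Proof.
  intros hd hn hdn; set (N := INR n) in *.
  pose proof (succ_ratio_recursion _ _ hcut hp n) as Rec.
  pose proof (succ_ratio_upper _ _ hcut hp (S n)) as Up; rewrite S_INR in Up; fold N in Rec, Up.
  pose proof (succ_ratio_pos _ hp n); pose proof (succ_ratio_pos _ hp (S n)).
  set (r0 := succ_ratio p n) in *; set (r1 := succ_ratio p (S n)) in *.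
  set (s := rho a ((N + 1) / V)).
  assert (hs : 0 < s) by (apply rho_pos; auto; apply Rdiv_lt_0_compat; lra).
  set (c := N * (N + 1)); set (d := (N + 1) * (N + 2)); set (T := a ^ 2 * V ^ 2 / (N + 1) ^ 2).
  assert (r1 <= T) by (unfold T; apply (Rle_div_r r1); [apply pow_lt | ]; nra).
  assert (s <= T).
  { eapply Rle_trans; [apply rho_le; auto; apply Rdiv_lt_0_compat; lra | right; unfold T; field; lra]. }
  assert (0 < c + d * r1) by (unfold c, d; nra).
  assert (0 < c + s * d) by (unfold c, d; nra).
  assert (hC : 0 < a ^ 2 * V ^ 2) by (apply Rmult_lt_0_compat; apply pow_lt; lra).
  assert (E : ln r0 - ln (a ^ 2 * V ^ 2 / (c + s * d)) = ln (c + d * s) - ln (c + d * r1)).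
  { replace r0 with (a ^ 2 * V ^ 2 / (c + d * r1)) by (unfold c, d; rewrite <- Rec; field; nra).
    rewrite !ln_div by lra; rewrite (Rmult_comm s d); ring. }
  pose proof (rho_recursion_defect a ha V N hV hn) as Defect; fold s c d in Defect.
  pose proof (ln_affine_contraction c d s r1 T ltac:(unfold c; nra) ltac:(unfold d; nra)
                hs ltac:(assumption) ltac:(assumption) ltac:(assumption)) as Contr.
  pose proof (contraction_factor_le a V N dl ha hV hd hn hdn) as Factor; cbv zeta in Factor.
  fold T c d in Factor.
  unfold ratio_err; rewrite S_INR; fold N r0 r1 s.
  replace (ln r0 - ln (rho a (N / V))) with
    ((ln r0 - ln (a ^ 2 * V ^ 2 / (c + s * d))) + (ln (a ^ 2 * V ^ 2 / (c + s * d)) - ln (rho a (N / V))))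
    by ring.
  eapply Rle_trans; [apply Rabs_triang |]; rewrite E, (Rabs_minus_sym (ln r1)).
  pose proof (Rabs_pos (ln s - ln r1)).
  assert (0 <= d * T / (c + d * T)) by (apply Rdiv_le_0_compat; unfold c, d; nra).
  nra.
Qed.

Lemma ratio_err_crude m : 1 <= INR m -> ratio_err a V p m <= 1 + a ^ 2 * V ^ 2 / INR m ^ 2.
Proof.
  intros hm; set (M := INR m) in *; set (C := a ^ 2 * V ^ 2).
  assert (hC : 0 < C) by (apply Rmult_lt_0_compat; apply pow_lt; lra).
  pose proof (succ_ratio_upper _ _ hcut hp m) as U; pose proof (succ_ratio_lower _ _ hcut hp m) as L.
  pose proof (succ_ratio_pos _ hp m); fold M C in U, L.
  set (lo := C / (M * (M + 1) + C)); set (hi := C / M ^ 2).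
  assert (hlo : 0 < lo) by (apply Rdiv_lt_0_compat; nra).
  assert (bound_ratio : lo <= succ_ratio p m <= hi).
  { split; rewrite <- (Rdiv_1_r (succ_ratio p m)); apply div_le_div_cross; nra. }
  assert (hx : 0 < M / V) by (apply Rdiv_lt_0_compat; lra).
  assert (bound_rho : lo <= rho a (M / V) <= hi).
  { split.
    - eapply Rle_trans; [| apply rho_ge; auto].
      replace (a ^ 2 / ((M / V) ^ 2 + a ^ 2)) with (C / (M ^ 2 + C)) by (unfold C; field; nra).
      apply div_le_div_cross; nra.
    - eapply Rle_trans; [apply rho_le; auto | right; unfold hi, C; field; lra]. }
  assert (ln lo <= ln (succ_ratio p m) <= ln hi) by (split; apply ln_le; lra).
  assert (ln lo <= ln (rho a (M / V)) <= ln hi) by (split; apply ln_le; lra).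
  unfold ratio_err; fold M; apply Rle_trans with (ln hi - ln lo); [apply Rabs_le; lra |].
  unfold lo, hi; rewrite !ln_div by nra.
  replace (M * (M + 1) + C) with (M ^ 2 * (1 + (M + C) / M ^ 2)) by (field; lra).
  assert (0 < (M + C) / M ^ 2) by (apply Rdiv_lt_0_compat; nra).
  rewrite ln_mult by (try apply pow_lt; lra).
  pose proof (ln_1p_le ((M + C) / M ^ 2) ltac:(assumption)).
  assert ((M + C) / M ^ 2 <= 1 + C / M ^ 2).
  { replace ((M + C) / M ^ 2) with (/ M + C / M ^ 2) by (field; lra).
    assert (/ M <= 1) by (rewrite <- Rinv_1; apply Rinv_le_contravar; lra). lra. }
  lra.
Qed.

End RatioError.

(** Unrolling [n] steps of [ratio_err_step] from [n] leaves [q ^ n] times the crude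
    bound at [2 n], which is [O(1)] since [dl V <= n], plus [2 / (n (1 - q))]. *)
Lemma ratio_err_uniformly_small a dl eps : 0 < a -> 0 < dl -> 0 < eps -> exists n0, forall V p,
  0 < V -> (forall n, 0 < p n) -> cut_balance (a ^ 2 * V ^ 2) p ->
  forall n, (n0 <= n)%nat -> dl * V <= INR n -> ratio_err a V p n <= eps.
Proof.
  intros ha hd he; set (q := 3 * a ^ 2 / (3 * a ^ 2 + dl ^ 2)).
  assert (hq : 0 <= q < 1).
  { split; [apply Rdiv_le_0_compat; nra |]; unfold q; apply Rlt_div_l; nra. }
  set (K0 := 1 + a ^ 2 / (4 * dl ^ 2)).
  assert (hK0 : 1 <= K0) by (assert (0 <= a ^ 2 / (4 * dl ^ 2)) by (apply Rdiv_le_0_compat; nra); unfold K0; lra).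
  destruct (pow_lt_1_zero q ltac:(rewrite Rabs_right; lra) (eps / 2 / K0)) as [n1 Hn1].
  { apply Rdiv_lt_0_compat; lra. }
  destruct (archimed_cor1 (eps * (1 - q) / 4)) as [n2 [Hn2 Hn2']]; [apply Rdiv_lt_0_compat; nra |].
  exists (max n1 (max n2 1)); intros V p hV hp hcut n hn hdn; set (N := INR n) in *.
  assert (hN1 : 1 <= N) by (apply (le_INR 1); lia).
  assert (hN2 : INR n2 <= N) by (apply le_INR; lia).
  assert (hnonneg : forall m, 0 <= ratio_err a V p m) by (intros; apply Rabs_pos).
  assert (Hstep : forall m, (n <= m)%nat -> ratio_err a V p m <= q * ratio_err a V p (S m) + 2 / INR m).
  { intros m hm; assert (N <= INR m) by (apply le_INR; auto).
    apply ratio_err_step; auto; lra. }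
  pose proof (unroll_contraction _ q n hq hN1 hnonneg Hstep n) as Unrolled; fold N in Unrolled.
  assert (far : ratio_err a V p (n + n) <= K0).
  { assert (h2n : INR (n + n) = 2 * N) by (rewrite plus_INR; unfold N; ring).
    eapply Rle_trans; [apply ratio_err_crude; auto; rewrite h2n; lra |].
    rewrite h2n; unfold K0; apply Rplus_le_compat_l, div_le_div_cross; try nra.
    assert (dl ^ 2 * V ^ 2 <= N ^ 2) by (rewrite <- Rpow_mult_distr; apply pow_incr; nra).
    nra. }
  assert (hqn : 0 <= q ^ n < eps / 2 / K0).
  { split; [apply pow_le; lra |].
    pose proof (Hn1 n ltac:(lia)) as H; rewrite Rabs_right in H; auto; apply Rle_ge, pow_le; lra. }
  assert (T1 : q ^ n * ratio_err a V p (n + n) <= eps / 2).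
  { apply Rle_trans with (q ^ n * K0); [apply Rmult_le_compat_l; lra |].
    apply Rlt_le, Rlt_div_r; [lra | tauto]. }
  assert (T2 : 2 / (N * (1 - q)) <= eps / 2).
  { assert (/ N <= / INR n2) by (apply Rinv_le_contravar; [apply lt_0_INR |]; auto).
    replace (2 / (N * (1 - q))) with (2 * / N / (1 - q)) by (field; lra).
    apply Rle_div_l; nra. }
  lra.
Qed.

(** [- ln (p n) / V = qpot (n / V) - log_corr n / V]: the limit theorem says that
    [log_corr] is [o(V)] uniformly near [n = x V]. *)
Definition log_corr (a V : R) (p : nat -> R) (n : nat) : R := ln (p n) + V * qpot a (INR n / V).

Section LogCorrection.

Variables (a V : R) (p : nat -> R).
Hypothesis ha : 0 < a.
Hypothesis hV : 0 < V.
Hypothesis hp : forall n, 0 < p n.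

Lemma log_corr_step j e : 1 <= INR j -> ratio_err a V p j <= e ->
  - e <= log_corr a V p (S j) - log_corr a V p j
      <= e + dqpot a (INR (S j) / V) - dqpot a (INR j / V).
Proof.
  intros hj he; unfold log_corr, ratio_err, succ_ratio in *; rewrite S_INR in *.
  set (x := INR j / V) in *; set (y := (INR j + 1) / V).
  assert (hx : 0 < x) by (apply Rdiv_lt_0_compat; lra).
  assert (hxy : y - x = / V) by (unfold x, y; field; lra).
  destruct (qpot_increment a ha x y hx ltac:(assert (0 < / V) by (apply Rinv_0_lt_compat; lra); lra)) as [G1 G2]; rewrite hxy in G1, G2.
  apply (Rmult_le_compat_l V) in G1, G2; try lra.
  replace (V * (dqpot a x * / V)) with (dqpot a x) in G1 by (field; lra).
  replace (V * (dqpot a y * / V)) with (dqpot a y) in G2 by (field; lra).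
  rewrite ln_div, ln_rho in he by auto; apply Rabs_le_between in he; nra.
Qed.

Lemma log_corr_telescope m e : 1 <= INR m ->
  (forall j, (m <= j)%nat -> ratio_err a V p j <= e) -> forall K,
  - (INR K * e) <= log_corr a V p (m + K) - log_corr a V p m
                <= INR K * e + dqpot a (INR (m + K) / V) - dqpot a (INR m / V).
Proof.
  intros hm H K; induction K as [| K IH]; [rewrite Nat.add_0_r; simpl; lra |].
  assert (1 <= INR (m + K)) by (eapply Rle_trans; [exact hm | apply le_INR; lia]).
  pose proof (log_corr_step (m + K) e ltac:(assumption) (H (m + K)%nat ltac:(lia))).
  replace (m + S K)%nat with (S (m + K)) by lia; rewrite S_INR; lra.
Qed.

Lemma log_corr_oscillation m e dl M j k : 1 <= INR m -> 0 <= e -> 0 < dl ->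
  (forall i, (m <= i)%nat -> ratio_err a V p i <= e) -> (m <= j)%nat -> (m <= k)%nat ->
  dl <= INR j / V <= M -> dl <= INR k / V <= M ->
  log_corr a V p k <= log_corr a V p j + (INR j + INR k) * e + (dqpot a M - dqpot a dl).
Proof.
  intros hm he hdl H hj hk hjw hkw.
  assert (osc : forall y w, dl <= y <= M -> dl <= w <= M -> dqpot a y - dqpot a w <= dqpot a M - dqpot a dl).
  { intros y w hy hw; pose proof (dqpot_le a ha y M ltac:(lra) ltac:(lra));
      pose proof (dqpot_le a ha dl w hdl ltac:(lra)); lra. }
  pose proof (osc _ _ hkw hjw); pose proof (osc _ _ hjw hkw).
  assert (0 <= INR j * e) by (apply Rmult_le_pos; auto; apply pos_INR).
  assert (0 <= INR k * e) by (apply Rmult_le_pos; auto; apply pos_INR).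
  destruct (le_lt_dec j k) as [l | l].
  - destruct (log_corr_telescope j e ltac:(eapply Rle_trans; [exact hm | apply le_INR; auto])
                ltac:(intros; apply H; lia) (k - j)) as [_ T].
    replace (j + (k - j))%nat with k in T by lia.
    assert (INR (k - j) * e <= INR k * e) by (apply Rmult_le_compat_r; auto; apply le_INR; lia).
    lra.
  - destruct (log_corr_telescope k e ltac:(eapply Rle_trans; [exact hm | apply le_INR; auto])
                ltac:(intros; apply H; lia) (j - k)) as [T _].
    replace (k + (j - k))%nat with j in T by lia.
    assert (INR (j - k) * e <= INR j * e) by (apply Rmult_le_compat_r; auto; apply le_INR; lia).
    lra.
Qed.

End LogCorrection.

Section FixedVolume.

Variables (a V : R) (p : nat -> R).
Hypothesis ha : 0 < a.
Hypothesis hV : 0 < V.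
Hypothesis hp : forall n, 0 < p n.
Hypothesis hcut : cut_balance (a ^ 2 * V ^ 2) p.
Hypothesis hsum : infinite_sum p 1.

Lemma log_corr_le_qpot n : log_corr a V p n <= V * qpot a (INR n / V).
Proof.
  assert (hp0 : forall i, 0 <= p i) by (intros; apply Rlt_le; auto).
  pose proof (term_le_partial_sum p n hp0); pose proof (sum_incr p n 1 hsum hp0).
  assert (ln (p n) <= 0) by (rewrite <- ln_1; apply ln_le; auto; lra).
  unfold log_corr; lra.
Qed.

Variables (dl M e : R) (m0 : nat).
Hypothesis hdl : 0 < dl.
Hypothesis he : 0 <= e.
Hypothesis hm0 : 1 <= INR m0.
Hypothesis herr : forall i, (m0 <= i)%nat -> ratio_err a V p i <= e.

Lemma log_corr_upper k mz : (m0 <= k)%nat -> (m0 <= mz)%nat ->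
  dl <= INR k / V <= M -> dl <= INR mz / V <= M ->
  log_corr a V p k <= V * qpot a (INR mz / V) + 2 * M * V * e + (dqpot a M - dqpot a dl).
Proof.
  intros hk hmz hkw hmzw.
  pose proof (log_corr_oscillation a V p ha hV hp m0 e dl M mz k hm0 he hdl herr hmz hk hmzw hkw).
  pose proof (log_corr_le_qpot mz).
  assert (INR mz + INR k <= 2 * M * V).
  { destruct hkw as [_ hk']; destruct hmzw as [_ hmz'].
    apply Rle_div_l in hk'; apply Rle_div_l in hmz'; lra. }
  assert ((INR mz + INR k) * e <= 2 * M * V * e) by (apply Rmult_le_compat_r; auto).
  lra.
Qed.

Variable z : R.
Hypothesis hz : 0 < z.
Hypothesis hza : 2 * z ^ 2 = a ^ 2.

(** Lower bound from normalization: the tails are geometrically small and, on the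
    window [m0, nhi], [p] is bounded by [exp (log_corr k + error)]. *)
Lemma log_corr_lower nhi k : (m0 <= nhi)%nat -> (m0 <= k)%nat -> dl <= INR k / V <= M ->
  dl <= INR m0 / V -> INR nhi / V <= M ->
  (forall j, (j < m0)%nat -> INR j * (INR j + 1) <= a ^ 2 * V ^ 2) ->
  (forall j, (nhi <= j)%nat -> 2 * (a ^ 2 * V ^ 2) <= INR j * (INR j + 1)) ->
  - (ln (INR nhi + 3) + INR m0 * ln 2 + 2 * M * V * e + (dqpot a M - dqpot a dl))
    <= log_corr a V p k.
Proof.
  intros hnhi hk hkw hlo hhi Hlo Hhi.
  assert (hC : 0 < a ^ 2 * V ^ 2) by (apply Rmult_lt_0_compat; apply pow_lt; lra).
  set (c := exp (log_corr a V p k + 2 * M * V * e + (dqpot a M - dqpot a dl))).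
  assert (window : forall j, (m0 <= j <= nhi)%nat -> p j <= c).
  { intros j [hj1 hj2].
    assert (jw : dl <= INR j / V <= M).
    { assert (INR m0 <= INR j <= INR nhi) by (split; apply le_INR; auto).
      split; [eapply Rle_trans; [exact hlo |] | eapply Rle_trans; [| exact hhi]];
        apply Rmult_le_compat_r; try (apply Rlt_le, Rinv_0_lt_compat); lra. }
    pose proof (log_corr_oscillation a V p ha hV hp m0 e dl M k j hm0 he hdl herr hk hj1 hkw jw).
    assert (INR k + INR j <= 2 * M * V).
    { destruct hkw as [_ hk']; destruct jw as [_ hj'].
      apply Rle_div_l in hk'; apply Rle_div_l in hj'; lra. }
    assert ((INR k + INR j) * e <= 2 * M * V * e) by (apply Rmult_le_compat_r; auto).
    assert (0 <= V * qpot a (INR j / V)) by (apply Rmult_le_pos, (qpot_nonneg a ha z); lra).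
    rewrite <- (exp_ln (p j)) by auto; unfold c; apply exp_le_compat; unfold log_corr in *; lra. }
  pose proof (window_mass_bound p m0 nhi c hnhi (fun n => Rlt_le _ _ (hp n)) hsum
                (fun j hj => succ_ratio_ge_half _ p hC hcut hp j (Hlo j hj))
                (fun j hj => succ_ratio_le_half _ p hC hcut hp j (Hhi j hj)) window) as mass.
  assert (0 < INR nhi + 3) by (pose proof (pos_INR nhi); lra).
  assert (0 < 2 ^ m0) by (apply pow_lt; lra).
  assert (0 < (INR nhi + 3) * 2 ^ m0 * c) by (repeat apply Rmult_lt_0_compat; auto; apply exp_pos).
  apply ln_le in mass; [| lra].
  unfold c in mass; rewrite ln_1, !ln_mult, ln_pow, ln_exp in mass
    by (try apply Rmult_lt_0_compat; auto using exp_pos; lra).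
  lra.
Qed.

End FixedVolume.

(** * The large-volume limit *)

Lemma eventually_le_mul c d : 0 < d -> Rbar_locally p_infty (fun V => c <= d * V).
Proof.
  intros hd; exists (c / d); intros V hV.
  rewrite Rmult_comm; apply Rle_div_l; lra.
Qed.

Lemma eventually_ln_le_mul M eps : 0 < M -> 0 < eps ->
  Rbar_locally p_infty (fun V => ln (M * V + 3) <= eps * V).
Proof.
  intros hM he; exists (Rmax 1 (4 * (M + 3) / eps ^ 2)); intros V hV.
  pose proof (Rmax_l 1 (4 * (M + 3) / eps ^ 2)); pose proof (Rmax_r 1 (4 * (M + 3) / eps ^ 2)).
  set (y := M * V + 3); assert (hy : 0 < y) by (unfold y; nra).
  assert (half : ln y = 2 * ln (sqrt y)).
  { rewrite <- (sqrt_sqrt y) at 1 by lra; rewrite ln_mult by (apply sqrt_lt_R0; lra); ring. }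
  assert (ln (sqrt y) < sqrt y).
  { pose proof (exp_ineq1_le (sqrt y)); rewrite <- (ln_exp (sqrt y)) at 2.
    apply ln_increasing; [apply sqrt_lt_R0 |]; lra. }
  assert (sqrt y <= eps * V / 2).
  { rewrite <- (sqrt_pow2 (eps * V / 2)) by nra; apply sqrt_le_1_alt.
    assert (4 * (M + 3) <= V * eps ^ 2) by (apply Rle_div_l; [nra | lra]).
    unfold y; nra. }
  lra.
Qed.

Lemma qpot_small_near_equilibrium a z eps : 0 < a -> 0 < z -> 2 * z ^ 2 = a ^ 2 -> 0 < eps ->
  exists d, 0 < d /\ forall y, Rabs (y - z) < d -> qpot a y < eps.
Proof.
  intros ha hz hza he.
  destruct (qpot_continuous a ha z hz eps he) as [d [hd H]].
  exists d; split; auto; intros y hy.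
  rewrite <- (Rplus_0_l eps), <- (qpot_equilibrium a ha z hz hza).
  destruct (Req_dec y z) as [-> | hne]; [lra |].
  assert (close : R_dist (qpot a y) (qpot a z) < eps) by (apply H; repeat split; auto).
  unfold R_dist in close; apply Rabs_lt_between in close; lra.
Qed.

Section Negligible.

Variables (a z x eps : R).
Hypothesis ha : 0 < a.
Hypothesis hz : 0 < z.
Hypothesis hza : 2 * z ^ 2 = a ^ 2.
Hypothesis hx : 0 < x.
Hypothesis heps : 0 < eps.

(** The window is [dl V <= n <= M V]; the choices of [dl], [M] and [e] make each error
    term in the upper and lower bounds at most [eps V / 8]. *)
Let dl := Rmin (a / 2) (Rmin (x / 2) (Rmin (z / 2) (eps / 8))).
Let M := 2 * a + 2 * x + 2 * z.
Let e := eps / (16 * M).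
Let G := dqpot a M - dqpot a dl.

Lemma dl_bounds : 0 < dl /\ dl <= a / 2 /\ dl <= x / 2 /\ dl <= z / 2 /\ dl <= eps / 8.
Proof.
  unfold dl; repeat split.
  - repeat apply Rmin_glb_lt; lra.
  - apply Rmin_l.
  - eapply Rle_trans; [apply Rmin_r | apply Rmin_l].
  - eapply Rle_trans; [apply Rmin_r |]; eapply Rle_trans; [apply Rmin_r | apply Rmin_l].
  - eapply Rle_trans; [apply Rmin_r |]; eapply Rle_trans; [apply Rmin_r | apply Rmin_r].
Qed.

Lemma M_pos : 0 < M.
Proof. unfold M; lra. Qed.

Lemma e_pos : 0 < e.
Proof. apply Rdiv_lt_0_compat; pose proof M_pos; lra. Qed.

Section AtVolume.

Variables (V : R) (p : nat -> R).
Hypothesis hV : 0 < V.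
Hypothesis hp : forall n, 0 < p n.
Hypothesis hcut : cut_balance (a ^ 2 * V ^ 2) p.
Hypothesis hsum : infinite_sum p 1.
Hypothesis herr : forall n, dl * V <= INR n -> ratio_err a V p n <= e.
Hypothesis hdlV : 1 <= dl * V.
Hypothesis hMV : 4 <= M * V.
Hypothesis hGV : G <= eps / 8 * V.

Variable nlo : nat.
Hypothesis hnlo : dl * V < INR nlo <= dl * V + 1.
Variable k : nat.
Hypothesis hkV : x / 2 * V < INR k < 3 * x / 2 * V.

Lemma err_from_nlo : forall i, (nlo <= i)%nat -> ratio_err a V p i <= e.
Proof. intros i hi; apply herr; pose proof (le_INR _ _ hi); lra. Qed.

Lemma nlo_le j : INR nlo < INR j + 1 -> (nlo <= j)%nat.
Proof. intros h; rewrite <- S_INR in h; apply INR_lt in h; lia. Qed.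

Lemma in_window j : (nlo <= j)%nat -> INR j <= M * V -> dl <= INR j / V <= M.
Proof.
  intros hj hjM; pose proof (le_INR _ _ hj).
  split; [apply Rle_div_r | apply Rle_div_l]; lra.
Qed.

Lemma k_in_window : (nlo <= k)%nat /\ dl <= INR k / V <= M.
Proof.
  destruct dl_bounds as (_ & _ & hdlx & _).
  assert (hk : (nlo <= k)%nat) by (apply nlo_le; nra).
  split; [| apply in_window]; auto; unfold M; nra.
Qed.

Lemma log_corr_upper_at : (forall y, Rabs (y - z) <= / V -> qpot a y <= eps / 8) ->
  2 <= z * V -> log_corr a V p k <= 3 * eps / 8 * V.
Proof.
  intros hnear hzV; destruct dl_bounds as (hdl & _ & _ & hdlz & _).
  destruct (nfloor_ex (z * V) ltac:(lra)) as [mz hmz].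
  assert (hmzlo : (nlo <= mz)%nat) by (apply nlo_le; nra).
  assert (hmzw : dl <= INR mz / V <= M) by (apply in_window; auto; unfold M; nra).
  destruct k_in_window as [hklo hkw].
  pose proof (log_corr_upper a V p ha hV hp hsum dl M e nlo hdl (Rlt_le _ _ e_pos)
                ltac:(lra) err_from_nlo k mz hklo hmzlo hkw hmzw) as U; fold G in U.
  assert (qpot a (INR mz / V) <= eps / 8).
  { apply hnear, Rabs_le.
    assert (INR mz / V <= z) by (apply Rle_div_l; lra).
    assert ((z * V - 1) / V <= INR mz / V).
    { apply Rmult_le_compat_r; [apply Rlt_le, Rinv_0_lt_compat |]; lra. }
    replace ((z * V - 1) / V) with (z - / V) in * by (field; lra); lra. }
  assert (2 * M * V * e = eps / 8 * V) by (unfold e; pose proof M_pos; field; lra).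
  nra.
Qed.

Lemma log_corr_lower_at : 1 <= eps / 8 * V -> ln (M * V + 3) <= eps / 8 * V ->
  - (5 * eps / 8 * V) <= log_corr a V p k.
Proof.
  intros h1V hlnV; destruct dl_bounds as (hdl & hdla & _ & _ & hdle).
  destruct (nfloor_ex (M * V) ltac:(lra)) as [nhi hnhi].
  destruct k_in_window as [hklo hkw].
  assert (hnlo_nhi : (nlo <= nhi)%nat) by (apply nlo_le; unfold M in *; nra).
  assert (lower_tail : forall j, (j < nlo)%nat -> INR j * (INR j + 1) <= a ^ 2 * V ^ 2).
  { intros j hj; assert (INR j + 1 <= INR nlo) by (rewrite <- S_INR; apply le_INR; lia).
    pose proof (pos_INR j).
    assert (dl * V <= a / 2 * V) by (apply Rmult_le_compat_r; lra).
    apply Rle_trans with (a / 2 * V * (2 * (a / 2 * V))); [apply Rmult_le_compat; lra | nra]. }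
  assert (upper_tail : forall j, (nhi <= j)%nat -> 2 * (a ^ 2 * V ^ 2) <= INR j * (INR j + 1)).
  { intros j hj; assert (INR nhi <= INR j) by (apply le_INR; auto).
    assert (4 * a ^ 2 <= M ^ 2) by (unfold M; nra).
    apply Rle_trans with (M * V / 2 * (M * V)); [nra | apply Rmult_le_compat; nra]. }
  pose proof (log_corr_lower a V p ha hV hp hcut hsum dl M e nlo hdl (Rlt_le _ _ e_pos)
                ltac:(lra) err_from_nlo z hz hza nhi k hnlo_nhi hklo hkw
                ltac:(apply Rle_div_r; lra) ltac:(apply Rle_div_l; lra)
                lower_tail upper_tail) as L; fold G in L.
  assert (ln (INR nhi + 3) <= eps / 8 * V).
  { eapply Rle_trans; [| exact hlnV]; apply ln_le; pose proof (pos_INR nhi); lra. }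
  assert (ln 2 < 1) by (rewrite <- ln_exp; apply ln_increasing; [lra | apply (exp_ineq1 1); lra]).
  pose proof ln_lt_2.
  assert (INR nlo * ln 2 <= eps / 4 * V) by nra.
  assert (2 * M * V * e = eps / 8 * V) by (unfold e; pose proof M_pos; field; lra).
  lra.
Qed.

End AtVolume.

Lemma log_corr_negligible (pi : R -> nat -> R) :
  (forall V, 0 < V -> (forall n, 0 < pi V n) /\ cut_balance (a ^ 2 * V ^ 2) (pi V)
                      /\ infinite_sum (pi V) 1) ->
  Rbar_locally p_infty (fun V => forall k, Rabs (INR k / V - x) < x / 2 ->
                                    Rabs (log_corr a V (pi V) k / V) < eps).
Proof.
  intros Hpi; destruct dl_bounds as (hdl & _); pose proof M_pos.
  destruct (ratio_err_uniformly_small a dl e ha hdl e_pos) as [n0 Hn0].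
  destruct (qpot_small_near_equilibrium a z (eps / 8) ha hz hza ltac:(lra)) as [ez [hez Hez]].
  assert (ev : Rbar_locally p_infty (fun V =>
    INR n0 <= dl * V /\ 1 <= dl * V /\ 2 <= ez * V /\ 4 <= M * V /\ 2 <= z * V /\
    G <= eps / 8 * V /\ 1 <= eps / 8 * V /\ ln (M * V + 3) <= eps / 8 * V)).
  { repeat apply filter_and; try apply eventually_le_mul; try apply eventually_ln_le_mul; lra. }
  eapply filter_imp; [| exact ev]; intros V (hn0 & hdlV & hezV & hMV & hzV & hGV & h1V & hlnV) k hk.
  assert (hV : 0 < V) by nra.
  destruct (Hpi V hV) as (hp & hcut & hsum).
  assert (herr : forall n, dl * V <= INR n -> ratio_err a V (pi V) n <= e).
  { intros n hn; apply (Hn0 V (pi V)); auto; apply INR_le; lra. }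
  assert (hnear : forall y, Rabs (y - z) <= / V -> qpot a y <= eps / 8).
  { intros y hy; apply Rlt_le, Hez.
    assert (/ V <= ez / 2) by (apply (Rmult_le_reg_r V); [lra | rewrite Rinv_l by lra; nra]).
    lra. }
  destruct (nfloor_ex (dl * V) ltac:(lra)) as [fl hfl].
  apply Rabs_lt_between in hk.
  assert (hkV : x / 2 * V < INR k < 3 * x / 2 * V).
  { split; [apply Rlt_div_r | apply Rlt_div_l]; auto; lra. }
  assert (hnlo : dl * V < INR (S fl) <= dl * V + 1) by (rewrite S_INR; lra).
  assert (log_corr a V (pi V) k <= 3 * eps / 8 * V)
    by (eapply log_corr_upper_at with (nlo := S fl); eauto).
  assert (- (5 * eps / 8 * V) <= log_corr a V (pi V) k)
    by (eapply log_corr_lower_at with (nlo := S fl); eauto).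
  apply Rabs_lt_between; split; [apply Rlt_div_r | apply Rlt_div_l]; auto; nra.
Qed.

End Negligible.

Lemma large_volume_limit a z (pi : R -> nat -> R) (Vs : nat -> R) (k : nat -> nat) x :
  0 < a -> 0 < z -> 2 * z ^ 2 = a ^ 2 ->
  (forall V, 0 < V -> (forall n, 0 < pi V n) /\ cut_balance (a ^ 2 * V ^ 2) (pi V)
                      /\ infinite_sum (pi V) 1) ->
  (forall n, 0 < Vs n) -> cv_infty Vs -> 0 < x -> Un_cv (fun n => INR (k n) / Vs n) x ->
  Un_cv (fun n => - / Vs n * ln (pi (Vs n) (k n))) (qpot a x).
Proof.
  intros ha hz hza Hpi hVs hinf hx hcv; apply is_lim_seq_Reals.
  replace (qpot a x) with (qpot a x - 0) by ring.
  apply (is_lim_seq_ext (fun n => qpot a (INR (k n) / Vs n) - log_corr a (Vs n) (pi (Vs n)) (k n) / Vs n)).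
  { intros n; unfold log_corr; field; apply Rgt_not_eq, hVs. }
  apply is_lim_seq_minus'.
  - apply is_lim_seq_continuous; [apply qpot_continuous | apply is_lim_seq_Reals]; auto.
  - apply is_lim_seq_Reals; intros eps heps.
    destruct (log_corr_negligible a z x eps ha hz hza hx heps pi Hpi) as [V0 HV0].
    destruct (hcv (x / 2) ltac:(lra)) as [N1 HN1]; destruct (hinf V0) as [N2 HN2].
    exists (max N1 N2); intros n hn; unfold R_dist; rewrite Rminus_0_r.
    apply HV0; [apply HN2 | apply HN1]; lia.
Qed.

Theorem mainTheorem3 (k1 k2 : R) (hk1 : 0 < k1) (hk2 : 0 < k2)
  (pi : R -> nat -> R)
  (hpi : forall V, 0 < V -> stationary_dist k1 k2 V (pi V)) :
  (forall (Vs : nat -> R) (k : nat -> nat) (xt : R),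
     (forall n, 0 < Vs n) -> Un_growing Vs -> cv_infty Vs ->
     0 < xt -> Un_cv (fun n => INR (k n) / Vs n) xt ->
     Un_cv (fun n => - / Vs n * ln (pi (Vs n) (k n))) (gfun k1 k2 xt)) /\
  (let xs := sqrt (k1 / (2 * k2)) in
   exists g1 g2 : R -> R,
     (forall x, 0 < x -> derivable_pt_lim (gfun k1 k2) x (g1 x)) /\
     (forall x, 0 < x -> derivable_pt_lim g1 x (g2 x)) /\
     (forall x, 0 < x -> 0 < g2 x) /\
     gfun k1 k2 xs = 0 /\
     (forall x, 0 < x -> x <> xs -> 0 < gfun k1 k2 x) /\
     (forall x, 0 < x -> g1 x * (k1 - 2 * k2 * x ^ 2) <= 0) /\
     (forall x, 0 < x -> (g1 x * (k1 - 2 * k2 * x ^ 2) = 0 <-> x = xs))).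
Proof.
  rewrite gfun_qpot; set (a := sqrt (k1 / k2)); set (z := sqrt (k1 / (2 * k2))).
  assert (ha : 0 < a) by (apply sqrt_lt_R0, Rdiv_lt_0_compat; lra).
  assert (hz : 0 < z) by (apply sqrt_lt_R0, Rdiv_lt_0_compat; lra).
  assert (ha2 : a ^ 2 = k1 / k2) by (apply pow2_sqrt, Rlt_le, Rdiv_lt_0_compat; lra).
  assert (hz2 : z ^ 2 = k1 / (2 * k2)) by (apply pow2_sqrt, Rlt_le, Rdiv_lt_0_compat; lra).
  assert (hza : 2 * z ^ 2 = a ^ 2) by (rewrite hz2, ha2; field; lra).
  assert (drift : forall x, k1 - 2 * k2 * x ^ 2 = 2 * k2 * (z ^ 2 - x ^ 2))
    by (intros; rewrite hz2; field; lra).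
  split.
  - intros Vs k x hVs _ hinf hx hcv; apply (large_volume_limit a z); auto.
    intros V hV; rewrite ha2; split; [| split].
    + apply (stationary_pos k1 k2 V); auto.
    + apply stationary_cut_balance; auto.
    + apply hpi; auto.
  - intros xs; exists (dqpot a), (d2qpot a).
    split; [| split; [| split; [| split; [| split; [| split]]]]]; intros; rewrite ?drift.
    + apply qpot_derive; auto.
    + apply dqpot_derive; auto.
    + apply d2qpot_pos; auto.
    + apply qpot_equilibrium; auto.
    + apply (qpot_pos a ha z); auto.
    + apply dqpot_drift_nonpos; auto; lra.
    + apply dqpot_drift_eq0; auto; lra.
Qed.
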